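(* Let $\varepsilon>0$, $m>0$, let $\mu,k$ be real functions on $\mathbb{R}^3$ and set $c_1=\frac{15}{m}\mu$, $c_2=\frac{9}{m^2}\big(k-\frac53\mu\big)$. Let $\boldsymbol\alpha(\mathbf{x},\mathbf{y})=\frac{\mathbf{y}-\mathbf{x}}{|\mathbf{y}-\mathbf{x}|^2}\chi_{B_\varepsilon(\mathbf{x})}(\mathbf{y})$ on $\mathbb{R}^3\times\mathbb{R}^3$. For $\mathbf{u}:\mathbb{R}^3\to\mathbb{R}^3$ define $(\mathcal{G}^*_{\boldsymbol\alpha}\mathbf{u})(\mathbf{x},\mathbf{y})=-\big(\mathbf{u}(\mathbf{y})-\mathbf{u}(\mathbf{x})\big)\cdot\boldsymbol\alpha(\mathbf{x},\mathbf{y})$, $(\overline{\mathcal{G}^*_{\boldsymbol\alpha}}\mathbf{u})(\mathbf{x})=-\int_{\mathbb{R}^3}\big(\mathbf{u}(\mathbf{z})-\mathbf{u}(\mathbf{x})\big)\cdot\boldsymbol\alpha(\mathbf{x},\mathbf{z})\,d\mathbf{z}$, $(\mathcal{D}^*_{\boldsymbol\alpha}\mathbf{u})(\mathbf{x},\mathbf{y})=-\big(\mathbf{u}(\mathbf{y})-\mathbf{u}(\mathbf{x})\big)\otimes\boldsymbol\alpha(\mathbf{x},\mathbf{y})$; for a scalar function $\eta$ of two points define $(\mathcal{G}_{\boldsymbol\alpha}\eta)(\mathbf{x})=\int_{\mathbb{R}^3}\big(\eta(\mathbf{y},\mathbf{x})+\eta(\mathbf{x},\mathbf{y})\big)\boldsymbol\alpha(\mathbf{x},\mathbf{y})\,d\mathbf{y}$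 (a scalar function $f$ of one point being treated as $\eta(\mathbf{x},\mathbf{y})=f(\mathbf{x})$), and for a tensor function $\boldsymbol\Psi$ of two points $(\mathcal{D}_{\boldsymbol\alpha}\boldsymbol\Psi)(\mathbf{x})=\int_{\mathbb{R}^3}\big(\boldsymbol\Psi(\mathbf{y},\mathbf{x})+\boldsymbol\Psi(\mathbf{x},\mathbf{y})\big)\boldsymbol\alpha(\mathbf{x},\mathbf{y})\,d\mathbf{y}$. Let $w(r)=1/r^2$ and let $\mathcal{L}$ be $(\mathcal{L}\mathbf{u})(\mathbf{x})=\int_{B_\varepsilon(\mathbf{x})}\big(c_1(\mathbf{x})+c_1(\mathbf{y})\big)w(|\mathbf{y}-\mathbf{x}|)\frac{(\mathbf{y}-\mathbf{x})\otimes(\mathbf{y}-\mathbf{x})}{|\mathbf{y}-\mathbf{x}|^2}\big(\mathbf{u}(\mathbf{y})-\mathbf{u}(\mathbf{x})\big)d\mathbf{y}+\int_{B_\varepsilon(\mathbf{x})}\int_{B_\varepsilon(\mathbf{x})}c_2(\mathbf{x})w(|\mathbf{y}-\mathbf{x}|)w(|\mathbf{z}-\mathbf{x}|)\big((\mathbf{y}-\mathbf{x})\otimes(\mathbf{z}-\mathbf{x})\big)\big(\mathbf{u}(\mathbf{z})-\mathbf{u}(\mathbf{x})\big)d\mathbf{z}d\mathbf{y}+\int_{B_\varepsilon(\mathbf{x})}\int_{B_\varepsilon(\mathbf{y})}c_2(\mathbf{y})w(|\mathbf{y}-\mathbf{x}|)w(|\mathbf{z}-\mathbf{y}|)\big((\mathbf{y}-\mathbf{x})\otimes(\mathbf{z}-\mathbf{y})\big)\big(\mathbf{u}(\mathbf{z})-\mathbf{u}(\mathbf{y})\big)d\mathbf{z}d\mathbf{y}$.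 Then, with $(c_1\mathcal{G}^*_{\boldsymbol\alpha}\mathbf{u})(\mathbf{x},\mathbf{y})=c_1(\mathbf{x})(\mathcal{G}^*_{\boldsymbol\alpha}\mathbf{u})(\mathbf{x},\mathbf{y})$ and $(c_1(\mathcal{D}^*_{\boldsymbol\alpha}\mathbf{u})^T)(\mathbf{x},\mathbf{y})=c_1(\mathbf{x})(\mathcal{D}^*_{\boldsymbol\alpha}\mathbf{u})(\mathbf{x},\mathbf{y})^T$, $-\mathcal{L}\mathbf{u}=\mathcal{G}_{\boldsymbol\alpha}(c_1\mathcal{G}^*_{\boldsymbol\alpha}\mathbf{u})+\mathcal{G}_{\boldsymbol\alpha}(c_2\overline{\mathcal{G}^*_{\boldsymbol\alpha}}\mathbf{u})$, and equivalently $-\mathcal{L}\mathbf{u}=\mathcal{D}_{\boldsymbol\alpha}\big(c_1(\mathcal{D}^*_{\boldsymbol\alpha}\mathbf{u})^T\big)+\mathcal{G}_{\boldsymbol\alpha}(c_2\overline{\mathcal{G}^*_{\boldsymbol\alpha}}\mathbf{u})$.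
   Context: $B_\varepsilon(\mathbf{x})$ is the open ball of radius $\varepsilon$ about $\mathbf{x}$ and $\chi_A$ the indicator of $A$; $(\mathbf{a}\otimes\mathbf{b})\mathbf{c}=\mathbf{a}(\mathbf{b}\cdot\mathbf{c})$. $\mathcal{L}$ is the linearized state-based peridynamics operator for an isotropic heterogeneous solid with bulk modulus $k$ and shear modulus $\mu$. All integrals are assumed to converge. *)

From HB Require Import structures.
From mathcomp Require Import all_boot all_order all_algebra.
From mathcomp Require Import all_classical all_reals all_analysis.
Set Implicit Arguments. Unset Strict Implicit. Unset Printing Implicit Defensive.
Import Order.TTheory GRing.Theory Num.Theory.
Local Open Scope ring_scope.
Local Open Scope classical_set_scope.

(* Points of R^3 are triples ((x1, x2), x3); R^3 carries the product of
   three copies of the Lebesgue measure (i.e. Lebesgue measure on R^3).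
   Vectors (values of vector fields, differences of points) are given by
   their components, as functions 'I_3 -> R; tensors as 'I_3 -> 'I_3 -> R. *)
Definition pt (R : realType) := ((R * R) * R)%type.

Definition leb3 (R : realType) :=
  ((@lebesgue_measure R \x @lebesgue_measure R) \x @lebesgue_measure R)%E.

Definition coord (R : realType) (p : pt R) (i : 'I_3) : R :=
  match val i with 0 => p.1.1 | 1 => p.1.2 | _ => p.2 end.

Definition dif (R : realType) (y x : pt R) : 'I_3 -> R :=
  fun i => coord y i - coord x i.

Definition dotv (R : realType) (a b : 'I_3 -> R) : R := \sum_(i < 3) a i * b i.
Definition nrm (R : realType) (a : 'I_3 -> R) : R := Num.sqrt (dotv a a).
Definition dist3 (R : realType) (x y : pt R) : R := nrm (dif y x).

Definition ball3 (R : realType) (eps : R) (x : pt R) : set (pt R) :=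
  [set y | dist3 x y < eps].
Definition chi_ball (R : realType) (eps : R) (x y : pt R) : R :=
  if dist3 x y < eps then 1 else 0.

Definition integ (R : realType) (D : set (pt R)) (f : pt R -> R) : R :=
  Rintegral (@leb3 R) D f.

Definition alpha (R : realType) (eps : R) (x y : pt R) : 'I_3 -> R :=
  fun i => dif y x i / (dist3 x y) ^+ 2 * chi_ball eps x y.

Definition Gstar (R : realType) (eps : R) (u : pt R -> 'I_3 -> R) (x y : pt R) : R :=
  - dotv (fun j => u y j - u x j) (alpha eps x y).

Definition Gstarbar (R : realType) (eps : R) (u : pt R -> 'I_3 -> R) (x : pt R) : R :=
  - integ setT (fun z => dotv (fun j => u z j - u x j) (alpha eps x z)).

Definition Dstar (R : realType) (eps : R) (u : pt R -> 'I_3 -> R) (x y : pt R)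
  : 'I_3 -> 'I_3 -> R :=
  fun i j => - ((u y i - u x i) * alpha eps x y j).

Definition Gop (R : realType) (eps : R) (eta : pt R -> pt R -> R) (x : pt R)
  : 'I_3 -> R :=
  fun i => integ setT (fun y => (eta y x + eta x y) * alpha eps x y i).

Definition Dop (R : realType) (eps : R) (Psi : pt R -> pt R -> 'I_3 -> 'I_3 -> R)
  (x : pt R) : 'I_3 -> R :=
  fun i => integ setT (fun y =>
    \sum_(j < 3) (Psi y x i j + Psi x y i j) * alpha eps x y j).

Definition wfun (R : realType) (r : R) : R := 1 / r ^+ 2.

Definition L1_integrand (R : realType) (c1 : pt R -> R) (u : pt R -> 'I_3 -> R)
  (x : pt R) (i : 'I_3) (y : pt R) : R :=
  (c1 x + c1 y) * wfun (dist3 x y) *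
  \sum_(j < 3) (dif y x i * dif y x j / (dist3 x y) ^+ 2) * (u y j - u x j).

Definition L2_integrand (R : realType) (c2 : pt R -> R) (u : pt R -> 'I_3 -> R)
  (x : pt R) (i : 'I_3) (y z : pt R) : R :=
  c2 x * wfun (dist3 x y) * wfun (dist3 x z) *
  \sum_(j < 3) (dif y x i * dif z x j) * (u z j - u x j).

Definition L3_integrand (R : realType) (c2 : pt R -> R) (u : pt R -> 'I_3 -> R)
  (x : pt R) (i : 'I_3) (y z : pt R) : R :=
  c2 y * wfun (dist3 x y) * wfun (dist3 y z) *
  \sum_(j < 3) (dif y x i * dif z y j) * (u z j - u y j).

Definition Lop (R : realType) (eps : R) (c1 c2 : pt R -> R) (u : pt R -> 'I_3 -> R)
  (x : pt R) : 'I_3 -> R :=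
  fun i =>
    integ (ball3 eps x) (L1_integrand c1 u x i)
  + integ (ball3 eps x) (fun y => integ (ball3 eps x) (L2_integrand c2 u x i y))
  + integ (ball3 eps x) (fun y => integ (ball3 eps y) (L3_integrand c2 u x i y)).

Definition c1fun (R : realType) (m : R) (mu : pt R -> R) : pt R -> R :=
  fun x => 15 / m * mu x.
Definition c2fun (R : realType) (m : R) (mu k : pt R -> R) : pt R -> R :=
  fun x => 9 / m ^+ 2 * (k x - 5 / 3 * mu x).

Definition integrable3 (R : realType) (D : set (pt R)) (f : pt R -> R) : Prop :=
  (@leb3 R).-integrable D (EFin \o f).

From Pilot Require Import Defs.
From HB Require Import structures.
From mathcomp Require Import all_boot all_order all_algebra.
From mathcomp Require Import all_classical all_reals all_analysis.
From mathcomp Require Import ring.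
Set Implicit Arguments. Unset Strict Implicit. Unset Printing Implicit Defensive.
Import Order.TTheory GRing.Theory Num.Theory.
Local Open Scope ring_scope.
Local Open Scope classical_set_scope.
Import numFieldNormedType.Exports.

(* Since alpha(x,y) = w(|y-x|) (y-x) on B_eps(x), zero outside, and
   alpha(y,x) = -alpha(x,y), the integrand of G_alpha(c1 G*_alpha u) is pointwise
   minus the first integrand of L u, and D_alpha(c1 (D*_alpha u)^T) has the same
   integrand as G_alpha(c1 G*_alpha u).  In the second and third terms of L u the
   inner integral factors as c2(p) w(|y-x|) (y-x) times -(overline{G*_alpha} u)(p),
   for p = x resp. p = y; their sum is minus the integrand of
   G_alpha(c2 overline{G*_alpha} u). *)

Section Lebesgue3.
Variable R : realType.
Implicit Types (D : set (pt R)) (f : pt R -> R).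

Lemma measurable_coord (i : 'I_3) :
  measurable_fun setT (fun p : pt R => Defs.coord p i).
Proof.
rewrite /Defs.coord; case: i => [[|[|n]] ?] /=.
- exact: measurableT_comp measurable_fst measurable_fst.
- exact: measurableT_comp measurable_snd measurable_fst.
- exact: measurable_snd.
Qed.

Lemma measurable_dist3 (x : pt R) : measurable_fun setT (dist3 x).
Proof.
have mdif j : measurable_fun setT (fun y : pt R => dif y x j * dif y x j).
  apply: measurable_realfun.measurable_funM;
  by apply: measurable_realfun.measurable_funB => //; exact: measurable_coord.
apply: measurableT_comp.
  exact: measurable_realfun.continuous_measurable_fun (@sqrt_continuous R).
exact: (@measurable_sum _ _ R setT _ _ (fun j y => dif y x j * dif y x j)).
Qed.

Lemma measurable_ball3 (eps : R) (x : pt R) : measurable (ball3 eps x).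
Proof.
have := measurable_realfun.measurable_fun_ltr (measurable_dist3 x)
  (measurable_cst eps) measurableT (Y := [set true]) I.
by rewrite setTI; congr measurable; apply/seteqP; split.
Qed.

Lemma integ_mkcond D f : integ setT (f \_ D) = integ D f.
Proof. by rewrite /integ [RHS]Rintegral_mkcond. Qed.

Lemma integrable3_mkcond D f :
  measurable D -> integrable3 D f <-> integrable3 setT (f \_ D).
Proof. by move=> mD; rewrite /integrable3 -restrict_EFin; exact: integrable_mkcond. Qed.

Lemma integZl D f r : measurable D -> integrable3 D f ->
  integ D (fun y => r * f y) = r * integ D f.
Proof. by move=> mD intf; rewrite /integ RintegralZl. Qed.

Lemma eq_integ D f g : {in D, f =1 g} -> integ D f = integ D g.
Proof. exact: (@eq_Rintegral _ _ _ (@leb3 R)). Qed.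

Lemma integD D f g : measurable D -> integrable3 D f -> integrable3 D g ->
  integ D (fun y => f y + g y) = integ D f + integ D g.
Proof. by move=> mD intf intg; rewrite /integ RintegralD. Qed.

Lemma integrable3D D f g : measurable D -> integrable3 D f -> integrable3 D g ->
  integrable3 D (fun y => f y + g y).
Proof. by move=> mD intf intg; apply: (integrableD _ intf intg). Qed.

Lemma integN D f : measurable D -> integrable3 D f ->
  integ D (fun y => - f y) = - integ D f.
Proof.
move=> mD intf; rewrite -mulN1r -integZl //.
by apply: eq_integ => y _; rewrite mulN1r.
Qed.

End Lebesgue3.

Section NonlocalCalculus.
Variables (R : realType) (eps : R).
Implicit Types (x y z p : pt R) (u : pt R -> 'I_3 -> R) (c : pt R -> R).

Lemma big_ord3 (F : 'I_3 -> R) :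
  \sum_(j < 3) F j = F (@Ordinal 3 0 isT) + F (@Ordinal 3 1 isT) + F (@Ordinal 3 2 isT).
Proof.
rewrite !big_ord_recr big_ord0 /= add0r; congr (F _ + F _ + F _); exact/val_inj.
Qed.

Lemma difC x y i : dif x y i = - dif y x i.
Proof. by rewrite /dif opprB. Qed.

Lemma dist3C x y : dist3 y x = dist3 x y.
Proof.
by rewrite /dist3 /nrm /dotv; congr Num.sqrt; apply: eq_bigr => j _; rewrite difC mulrNN.
Qed.

Lemma chi_ballC x y : chi_ball eps y x = chi_ball eps x y.
Proof. by rewrite /chi_ball dist3C. Qed.

Lemma alphaC x y j : alpha eps y x j = - alpha eps x y j.
Proof. by rewrite /alpha difC dist3C chi_ballC !mulNr. Qed.

Lemma patch_ball3E (f : pt R -> R) x y :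
  (f \_ (ball3 eps x)) y = if dist3 x y < eps then f y else 0.
Proof.
rewrite patchE; case: ifPn => [/set_mem -> //|yNB].
by case: ifPn => // xy; case/negP: yNB; exact: mem_set.
Qed.

Definition bond_proj u p z : R :=
  wfun (dist3 p z) * \sum_(j < 3) dif z p j * (u z j - u p j).

Lemma dotv_alphaE u p :
  (fun z => dotv (fun j => u z j - u p j) (alpha eps p z))
  = bond_proj u p \_ (ball3 eps p).
Proof.
apply/funext => z; rewrite patch_ball3E /bond_proj /dotv /alpha /chi_ball /wfun.
case: ifP => _; last by rewrite big1 // => j _; rewrite !mulr0.
by rewrite !big_ord3; ring.
Qed.

Lemma GstarbarE u p : Gstarbar eps u p = - integ (ball3 eps p) (bond_proj u p).
Proof. by rewrite /Gstarbar dotv_alphaE integ_mkcond. Qed.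

Lemma integrable3_bond_proj u p :
  integrable3 setT (fun z => dotv (fun j => u z j - u p j) (alpha eps p z)) ->
  integrable3 (ball3 eps p) (bond_proj u p).
Proof.
by rewrite dotv_alphaE -integrable3_mkcond //; exact: measurable_ball3.
Qed.

Lemma L2_integrandE c u x i y :
  L2_integrand c u x i y = fun z => (c x * wfun (dist3 x y) * dif y x i) * bond_proj u x z.
Proof. by apply/funext => z; rewrite /L2_integrand /bond_proj !big_ord3; ring. Qed.

Lemma L3_integrandE c u x i y :
  L3_integrand c u x i y = fun z => (c y * wfun (dist3 x y) * dif y x i) * bond_proj u y z.
Proof. by apply/funext => z; rewrite /L3_integrand /bond_proj !big_ord3; ring. Qed.

Lemma alpha_ball x y i :
  dist3 x y < eps -> alpha eps x y i = wfun (dist3 x y) * dif y x i.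
Proof. by move=> xy; rewrite /alpha /chi_ball xy /wfun mulr1 mulrC mul1r. Qed.

(* alpha(x, .) vanishes off B_eps(x) *)
Lemma Gop_ball eta x i :
  Gop eps eta x i = integ (ball3 eps x) (fun y => (eta y x + eta x y) * alpha eps x y i).
Proof.
rewrite /Gop -[RHS]integ_mkcond; apply: eq_integ => y _.
by rewrite patch_ball3E /alpha /chi_ball; case: ifP => _; rewrite ?mulr0.
Qed.

Lemma DstarT_alpha c u x i y :
  \sum_(j < 3) (c y * Dstar eps u y x j i + c x * Dstar eps u x y j i) * alpha eps x y j
  = (c y * Gstar eps u y x + c x * Gstar eps u x y) * alpha eps x y i.
Proof. by rewrite /Gstar /Dstar /dotv !big_ord3 !(alphaC x y); ring. Qed.

Lemma Gop_c_Gstar c u x i :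
  integrable3 (ball3 eps x) (L1_integrand c u x i) ->
  Gop eps (fun p q => c p * Gstar eps u p q) x i
  = - integ (ball3 eps x) (L1_integrand c u x i).
Proof.
move=> intL1; rewrite Gop_ball -integN //; last exact: measurable_ball3.
apply: eq_integ => y /set_mem xy; rewrite /Gstar /dotv !big_ord3 !(alphaC x y).
by rewrite !alpha_ball // /L1_integrand /wfun !big_ord3; ring.
Qed.

Lemma Dop_c_DstarT c u x i :
  Dop eps (fun p q a b => c p * Dstar eps u p q b a) x i
  = Gop eps (fun p q => c p * Gstar eps u p q) x i.
Proof. by rewrite /Dop /Gop; under eq_fun do rewrite DstarT_alpha. Qed.

Lemma integ_L2 c u x i y :
  integrable3 setT (fun z => dotv (fun j => u z j - u x j) (alpha eps x z)) ->
  integ (ball3 eps x) (L2_integrand c u x i y)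
  = - (c x * Gstarbar eps u x) * (wfun (dist3 x y) * dif y x i).
Proof.
move=> intx; rewrite L2_integrandE.
rewrite integZl ?GstarbarE; [ring | exact: measurable_ball3 |].
exact: integrable3_bond_proj.
Qed.

Lemma integ_L3 c u x i y :
  integrable3 setT (fun z => dotv (fun j => u z j - u y j) (alpha eps y z)) ->
  integ (ball3 eps y) (L3_integrand c u x i y)
  = - (c y * Gstarbar eps u y) * (wfun (dist3 x y) * dif y x i).
Proof.
move=> inty; rewrite L3_integrandE.
rewrite integZl ?GstarbarE; [ring | exact: measurable_ball3 |].
exact: integrable3_bond_proj.
Qed.

Lemma Gop_c_Gstarbar c u x i :
  (forall p, integrable3 setT (fun z => dotv (fun j => u z j - u p j) (alpha eps p z))) ->
  integrable3 (ball3 eps x) (fun y => integ (ball3 eps x) (L2_integrand c u x i y)) ->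
  integrable3 (ball3 eps x) (fun y => integ (ball3 eps y) (L3_integrand c u x i y)) ->
  Gop eps (fun p q => c p * Gstarbar eps u p) x i
  = - (integ (ball3 eps x) (fun y => integ (ball3 eps x) (L2_integrand c u x i y))
     + integ (ball3 eps x) (fun y => integ (ball3 eps y) (L3_integrand c u x i y))).
Proof.
move=> intdiv intL2 intL3; have mB := measurable_ball3 eps x.
rewrite Gop_ball -integD // -integN //; last exact: integrable3D.
apply: eq_integ => y /set_mem xy.
by rewrite alpha_ball // integ_L2 // integ_L3 //; ring.
Qed.

End NonlocalCalculus.

Theorem theorem4p2 (R : realType) (eps m : R) (mu k : pt R -> R)
    (u : pt R -> 'I_3 -> R) :
  0 < eps -> 0 < m ->
  let c1 := c1fun m mu in
  let c2 := c2fun m mu k in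
  let eta1 := fun p q : pt R => c1 p * Gstar eps u p q in
  let eta2 := fun p q : pt R => c2 p * Gstarbar eps u p in
  let Psi := fun (p q : pt R) (a b : 'I_3) => c1 p * Dstar eps u p q b a in
  (* "all integrals are assumed to converge" *)
  (forall x i, integrable3 (ball3 eps x) (L1_integrand c1 u x i)) ->
  (forall x i y, integrable3 (ball3 eps x) (L2_integrand c2 u x i y)) ->
  (forall x i, integrable3 (ball3 eps x)
     (fun y => integ (ball3 eps x) (L2_integrand c2 u x i y))) ->
  (forall x i y, integrable3 (ball3 eps y) (L3_integrand c2 u x i y)) ->
  (forall x i, integrable3 (ball3 eps x)
     (fun y => integ (ball3 eps y) (L3_integrand c2 u x i y))) ->
  (forall x, integrable3 setT
     (fun z => dotv (fun j => u z j - u x j) (alpha eps x z))) ->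
  (forall x i, integrable3 setT
     (fun y => (eta1 y x + eta1 x y) * alpha eps x y i)) ->
  (forall x i, integrable3 setT
     (fun y => (eta2 y x + eta2 x y) * alpha eps x y i)) ->
  (forall x i, integrable3 setT
     (fun y => \sum_(j < 3) (Psi y x i j + Psi x y i j) * alpha eps x y j)) ->
  (forall x i, - Lop eps c1 c2 u x i = Gop eps eta1 x i + Gop eps eta2 x i) /\
  (forall x i, - Lop eps c1 c2 u x i = Dop eps Psi x i + Gop eps eta2 x i).
Proof.
move=> _ _ c1 c2 eta1 eta2 Psi intL1 _ intL2 _ intL3 intdiv _ _ _.
have minusL x i : - Lop eps c1 c2 u x i = Gop eps eta1 x i + Gop eps eta2 x i.
  rewrite Gop_c_Gstar // Gop_c_Gstarbar // /Lop; ring.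
by split=> x i; rewrite ?Dop_c_DstarT minusL.
Qed.
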